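(* Let $s=(\ell,\nu)\in S$, let $(\ell,\zeta)$ be a region with $(\ell,[\nu])\to_*(\ell,\zeta)$, let $a\in\mathit{Act}$, and let $F:\hat S\to\mathbb{R}$ be regionally quasi-simple. Then the function $F^\oplus_{s,\zeta,a}:I\to\mathbb{R}$, where $I=\{t\in\mathbb{R}_{\ge0}:\nu+t\in\zeta\}$, defined by $$F^\oplus_{s,\zeta,a}(t)=t+\sum_{(C,\ell')\in 2^{\mathcal{C}}\times L}\delta[\ell,a](C,\ell')\cdot F\big((\ell',(\nu+t)[C:=0]),(\ell',\zeta[C:=0])\big),$$ is continuous and nondecreasing.
   Context: Fix $k\in\mathbb{N}$ and a finite set of clocks $\mathcal{C}$; $V$ is the set of $\nu:\mathcal{C}\to[0,k]$; $\nu+t$ adds $t$ to every clock; $\nu[C:=0]$ resets the clocks in $C\subseteq\mathcal{C}$; $\|x\|_\infty=\max_i|x_i|$; $\overline{X}$ is the closure of $X$. A clock region is a maximal set of valuations satisfying exactly the same constraints $c\bowtie i$, $c-c'\bowtie i$ ($c,c'\in\mathcal{C}$, $i\in\{0,\dots,k\}$, $\bowtie\in\{<,>,=,\le,\ge\}$); $[\nu]$ is the region of $\nu$; $\zeta[C:=0]=[\nu[C:=0]]$ for $\nu\in\zeta$. Clock zones are convex unions of clock regions. A PTA is $\mathsf{T}=(L,L_F,\mathcal{C},\mathit{Inv},\mathit{Act},E,\delta)$ with finite locations $L$, final locations $L_F$, invariants $\mathit{Inv}:L\to$ clock zones, finite actions $\mathit{Act}$, enabledness $E:L\times\mathit{Act}\to$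 clock zones and $\delta:L\times\mathit{Act}\to\mathrm{Dist}(2^{\mathcal{C}}\times L)$. Its states are $S=\{(\ell,\nu):\nu\in\mathit{Inv}(\ell)\}$. A region is $(\ell,\zeta)$ with $\zeta\subseteq\mathit{Inv}(\ell)$ a clock region; $R\to_*R'$ iff some $(\ell,\nu)\in R$ and $t\ge0$ satisfy $(\ell,\nu+t)\in R'$. The boundary-region-graph state space is $\hat S=\{((\ell,\nu),(\ell,\zeta)):(\ell,\zeta)\text{ a region},\ \nu\in\overline{\zeta}\}$. For $\nu,\nu'\in V$, $\nu\unlhd\nu'$ iff there is $t\ge0$ such that for every clock $c$, $\nu'(c)-\nu(c)=t$ or $\nu'(c)=\nu(c)$, with $\nu'(c)-\nu(c)=t$ for at least one $c$; then $\nu'-\nu:=t$. $f:X\to\mathbb{R}$ is quasi-simple if it is Lipschitz w.r.t. $\|\cdot\|_\infty$ and whenever $\nu\unlhd\nu'$ in $X$, $f(\nu)\ge f(\nu')$ and $f(\nu)-f(\nu')\le\nu'-\nu$. $F:\hat S\to\mathbb{R}$ is regionally quasi-simple if for every region $(\ell,\zeta)$, $\nu\mapsto F((\ell,\nu),(\ell,\zeta))$ on $\overline{\zeta}$ is quasi-simple. *)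

From HB Require Import structures.
From mathcomp Require Import all_boot all_order all_algebra.
From mathcomp Require Import all_classical all_reals all_analysis.
Set Implicit Arguments. Unset Strict Implicit. Unset Printing Implicit Defensive.
Import Order.TTheory GRing.Theory Num.Theory.
Import numFieldNormedType.Exports.
Local Open Scope classical_set_scope.
Local Open Scope ring_scope.

Section PTA.
Variables (R : realType) (k : nat) (Clk : finType).

Definition valuation := Clk -> R.

Definition inV (x : valuation) : Prop := forall c, 0 <= x c <= k%:R.

Definition vshift (x : valuation) (t : R) : valuation := fun c => x c + t.

Definition vreset (x : valuation) (C : {set Clk}) : valuation :=
  fun c => if c \in C then 0 else x c.

Definition supdist (x y : valuation) : R := \big[Num.max/0]_(c : Clk) `|x c - y c|.

Inductive cmp := CLt | CLe | CEq | CGe | CGt.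
Definition cmp_eval (o : cmp) (a b : R) : bool :=
  match o with
  | CLt => a < b | CLe => a <= b | CEq => a == b | CGe => a >= b | CGt => a > b
  end.

Definition reg_equiv (x y : valuation) : Prop :=
  forall (o : cmp) (c c' : Clk) (i : nat), (i <= k)%N ->
    cmp_eval o (x c) i%:R = cmp_eval o (y c) i%:R /\
    cmp_eval o (x c - x c') i%:R = cmp_eval o (y c - y c') i%:R.

Definition reg_of (x : valuation) : set valuation :=
  [set y | inV y /\ reg_equiv y x].

Definition is_clock_region (Z : set valuation) : Prop :=
  exists2 x, inV x & Z = reg_of x.

(* zeta[C:=0] = [nu[C:=0]] for nu in zeta (union form, independent of choice) *)
Definition reset_region (Z : set valuation) (C : {set Clk}) : set valuation :=
  [set y | exists2 x, Z x & reg_of (vreset x C) y].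

Definition is_zone (Z : set valuation) : Prop :=
  [/\ Z `<=` inV,
      (forall x y (l : R), Z x -> Z y -> 0 <= l <= 1 ->
          Z (fun c => l * x c + (1 - l) * y c))
    & forall x, Z x -> reg_of x `<=` Z].

Definition sup_closure (Z : set valuation) : set valuation :=
  [set x | forall e : R, 0 < e -> exists2 y, Z y & supdist x y < e].

Definition lhd_by (x y : valuation) (t : R) : Prop :=
  [/\ 0 <= t, (forall c, y c - x c = t \/ y c = x c) & exists c, y c - x c = t].

Definition quasi_simple (X : set valuation) (f : valuation -> R) : Prop :=
  (exists K : R, forall x y, X x -> X y -> `|f x - f y| <= K * supdist x y) /\
  (forall x y t, X x -> X y -> lhd_by x y t -> f y <= f x /\ f x - f y <= t).

Definition is_dist (T : finType) (d : T -> R) : Prop :=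
  (forall x, 0 <= d x) /\ \sum_(x : T) d x = 1.

Variables (L Act : finType).

Definition is_pta (LF : {set L}) (Inv : L -> set valuation)
  (E : L -> Act -> set valuation) (delta : L -> Act -> ({set Clk} * L)%type -> R) : Prop :=
  [/\ forall l, is_zone (Inv l),
      forall l a, is_zone (E l a)
    & forall l a, is_dist (delta l a)].

Definition is_region (Inv : L -> set valuation) (l : L) (Z : set valuation) : Prop :=
  is_clock_region Z /\ Z `<=` Inv l.

Definition reaches (x : valuation) (Z : set valuation) : Prop :=
  exists y t, reg_of x y /\ 0 <= t /\ Z (vshift y t).

(* F : S^ -> R, where ((l,nu),(l,zeta)) is encoded as F l nu zeta;
   regionally quasi-simple *)
Definition regionally_qs (Inv : L -> set valuation)
  (F : L -> valuation -> set valuation -> R) : Prop :=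
  forall l Z, is_region Inv l Z -> quasi_simple (sup_closure Z) (fun x => F l x Z).

End PTA.

From HB Require Import structures.
From mathcomp Require Import all_boot all_order all_algebra.
From mathcomp Require Import all_classical all_reals all_analysis.
From mathcomp Require Import ring lra.
Import Order.TTheory GRing.Theory Num.Theory.
Import numFieldNormedType.Exports.
Local Open Scope classical_set_scope.
Local Open Scope ring_scope.
Set Implicit Arguments. Unset Strict Implicit.

(* Each summand of F^+ is quasi-simple along the delay path t |-> (nu + t)[C:=0],
   which stays in the closure of the region zeta[C:=0] and moves at unit speed in
   the sup norm: hence it is Lipschitz in t, and on t <= s it decreases by at most
   s - t, because (nu + t)[C:=0] <| (nu + s)[C:=0] with delay s - t.  Averaging
   against the distribution delta(l, a), the term t absorbs these decreases, so
   F^+ is nondecreasing, and it is Lipschitz, hence continuous. *)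

Lemma klipschitz_within_continuous (K : realFieldType) (V W : normedModType K)
    (k : K) (A : set V) (f : V -> W) :
  k.-lipschitz_A f -> {within A, continuous f}.
Proof.
move=> f_lip; apply/subspace_continuousP => x Ax.
apply/cvgrPdist_lt => e e_gt0.
have k1_gt0 : 0 < `|k| + 1 by rewrite ltr_wpDl.
have k_le : k <= `|k| + 1 by rewrite (le_trans (ler_norm k)) ?lerDl.
near=> y.
have Ay : A y by near: y; apply: withinT.
have xy_lt : `|x - y| < e / (`|k| + 1).
  by near: y; apply: cvg_within; apply: cvgr_dist_lt => //; exact: divr_gt0.
apply: (le_lt_trans (f_lip (x, y) (conj Ax Ay))).
by rewrite (le_lt_trans (ler_wpM2r (normr_ge0 _) k_le)) // mulrC -ltr_pdivlMr.
Unshelve. all: by end_near. Qed.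

Section Drift.
Variables (R : realType) (T : finType) (d : T -> R) (g : T -> R -> R) (J : set R).
Hypothesis d_dist : is_dist d.

Lemma drift_sum_nondecreasing :
  (forall p, 0 < d p -> forall t s, J t -> J s -> t <= s -> g p t - g p s <= s - t) ->
  forall t s, J t -> J s -> t <= s ->
    t + \sum_p d p * g p t <= s + \sum_p d p * g p s.
Proof.
case: d_dist => d_ge0 d_sum1 g_drift t s Jt Js ts.
have : \sum_p (d p * g p t - d p * g p s) <= \sum_p d p * (s - t).
  apply: ler_sum => p _; rewrite -mulrBr.
  have := d_ge0 p; rewrite le_eqVlt => /predU1P[<-|dp_gt0]; first by rewrite !mul0r.
  by rewrite ler_wpM2l ?d_ge0 ?g_drift.
rewrite -big_distrl /= d_sum1 mul1r sumrB.
lra.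
Qed.

Lemma drift_sum_lipschitz :
  (forall p, 0 < d p -> exists k : R, k.-lipschitz_J (g p)) ->
  exists k : R, k.-lipschitz_J (fun t => t + \sum_p d p * g p t).
Proof.
case: d_dist => d_ge0 _ g_lip.
have : forall p, exists k : R, 0 < d p -> k.-lipschitz_J (g p).
  move=> p; have [/g_lip [k hk]|_] := ltP 0 (d p); first by exists k.
  by exists 0.
move=> /choice [k hk]; exists (1 + \sum_p d p * k p) => -[t s] [/= Jt Js].
have -> : t + \sum_p d p * g p t - (s + \sum_p d p * g p s)
    = (t - s) + \sum_p d p * (g p t - g p s).
  by rewrite opprD addrACA -sumrB; congr (_ + _); apply: eq_bigr => p _; rewrite mulrBr.
rewrite mulrDl mul1r (le_trans (ler_normD _ _)) // lerD2l big_distrl /=.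
rewrite (le_trans (ler_norm_sum _ _ _)) //; apply: ler_sum => p _.
rewrite normrM ger0_norm // -mulrA.
have := d_ge0 p; rewrite le_eqVlt => /predU1P[<-|dp_gt0]; first by rewrite !mul0r.
by rewrite ler_wpM2l // (hk p dp_gt0 (t, s)).
Qed.

End Drift.

Section Valuations.
Variables (R : realType) (k : nat) (Clk : finType).
Implicit Types (x y : valuation R Clk) (C : {set Clk}) (Z : set (valuation R Clk)).

Lemma supdist_ge0 x y : 0 <= supdist x y.
Proof.
apply: (big_ind (fun v => 0 <= v)) => // u v u_ge0 v_ge0.
by rewrite le_max u_ge0.
Qed.

Lemma supdist_le x y (e : R) :
  0 <= e -> (forall c, `|x c - y c| <= e) -> supdist x y <= e.
Proof.
move=> e_ge0 xy_le; apply: (big_ind (fun v => v <= e)) => // u v ue ve.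
by rewrite ge_max ue ve.
Qed.

Lemma supdist_xx x : supdist x x = 0.
Proof.
apply/le_anti; rewrite supdist_ge0 andbT.
by apply: supdist_le => // c; rewrite subrr normr0.
Qed.

Lemma supdist_delay x C (t s : R) :
  supdist (vreset (vshift x t) C) (vreset (vshift x s) C) <= `|t - s|.
Proof.
apply: supdist_le => // c; rewrite /vreset /vshift.
by case: (c \in C); rewrite ?subrr ?normr0 // opprD addrACA subrr add0r.
Qed.

Lemma lhd_by_delay x C (t s : R) (c0 : Clk) : c0 \notin C -> t <= s ->
  lhd_by (vreset (vshift x t) C) (vreset (vshift x s) C) (s - t).
Proof.
move=> c0C ts; split; first by rewrite subr_ge0.
  by move=> c; rewrite /vreset /vshift; case: (c \in C); [right | left; ring].
by exists c0; rewrite /vreset /vshift (negbTE c0C); ring.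
Qed.

Lemma vreset_full x C : (forall c, c \in C) -> vreset x C = fun=> 0.
Proof. by move=> CT; apply/funext => c; rewrite /vreset CT. Qed.

Lemma inV_vreset x C : inV k x -> inV k (vreset x C).
Proof. by move=> xV c; rewrite /vreset; case: (c \in C); rewrite ?lexx ?ler0n. Qed.

Lemma reg_equiv_sym x y : reg_equiv k x y -> reg_equiv k y x.
Proof. by move=> xy o c c' i ik; have [-> ->] := xy o c c' i ik. Qed.

Lemma reg_equiv_trans x y z :
  reg_equiv k x y -> reg_equiv k y z -> reg_equiv k x z.
Proof. by move=> xy yz o c c' i ik; have [-> ->] := xy o c c' i ik; apply: yz. Qed.

Lemma reg_of_equiv x y : reg_equiv k x y -> reg_of k x = reg_of k y.
Proof.
move=> xy; apply/seteqP; split=> z [zV zx]; split=> //.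
  exact: reg_equiv_trans zx xy.
exact: reg_equiv_trans zx (reg_equiv_sym xy).
Qed.

Lemma cmp_eval_oppr (a b : R) (o : cmp) (i : nat) : 0 <= a -> 0 <= b ->
  (forall o', cmp_eval o' a 0 = cmp_eval o' b 0) ->
  cmp_eval o (- a) i%:R = cmp_eval o (- b) i%:R.
Proof.
move=> a_ge0 b_ge0 ab; case: i => [|i].
  have := ab (match o with CLt => CGt | CLe => CGe | CEq => CEq
                         | CGe => CLe | CGt => CLt end).
  by case: o => /=; rewrite ?oppr_lt0 ?oppr_le0 ?oppr_eq0 ?oppr_ge0 ?oppr_gt0.
have a_lt : - a < i.+1%:R by rewrite (le_lt_trans _ (ltr0Sn _ _)) // oppr_le0.
have b_lt : - b < i.+1%:R by rewrite (le_lt_trans _ (ltr0Sn _ _)) // oppr_le0.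
case: o => /=.
- by rewrite a_lt b_lt.
- by rewrite (ltW a_lt) (ltW b_lt).
- by rewrite (lt_eqF a_lt) (lt_eqF b_lt).
- by rewrite !leNgt a_lt b_lt.
- by rewrite !ltNge (ltW a_lt) (ltW b_lt).
Qed.

Lemma reg_equiv_vreset x y C : inV k x -> inV k y ->
  reg_equiv k x y -> reg_equiv k (vreset x C) (vreset y C).
Proof.
move=> xV yV xy o c c' i ik; have [xy1 xy2] := xy o c c' i ik.
rewrite /vreset; case: (c \in C); case: (c' \in C); split=> //; rewrite ?subr0 //.
rewrite !sub0r; apply: cmp_eval_oppr; [by case/andP: (xV c') | by case/andP: (yV c')|].
by move=> o'; have [] := xy o' c' c' 0 (leq0n _).
Qed.

Lemma reset_region_reg_of x C :
  inV k x -> reset_region k (reg_of k x) C = reg_of k (vreset x C).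
Proof.
move=> xV; apply/seteqP; split=> [y [z [zV zx]]|y xy]; last by exists x.
by rewrite (reg_of_equiv (reg_equiv_vreset C zV xV zx)).
Qed.

Lemma is_clock_region_reset Z C :
  is_clock_region k Z -> is_clock_region k (reset_region k Z C).
Proof.
case=> x xV ->; exists (vreset x C); first exact: inV_vreset.
exact: reset_region_reg_of.
Qed.

Lemma clock_region_inV Z y : is_clock_region k Z -> Z y -> inV k y.
Proof. by case=> x _ -> []. Qed.

Lemma sup_closure_subset Z : Z `<=` sup_closure Z.
Proof. by move=> x Zx e e_gt0; exists x; rewrite ?supdist_xx. Qed.

Lemma vreset_in_reset_closure Z C y : is_clock_region k Z -> Z y ->
  sup_closure (reset_region k Z C) (vreset y C).
Proof.
move=> Zreg Zy; apply: sup_closure_subset; exists y => //.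
by split=> //; apply/inV_vreset/(clock_region_inV Zreg).
Qed.

End Valuations.

Section QuasiSimpleDelay.
Variables (R : realType) (Clk : finType) (X : set (valuation R Clk)).
Variables (f : valuation R Clk -> R) (x : valuation R Clk) (C : {set Clk}) (J : set R).
Hypothesis f_qs : quasi_simple X f.
Hypothesis delay_in : forall t, J t -> X (vreset (vshift x t) C).

Lemma quasi_simple_delay_lipschitz :
  exists K : R, K.-lipschitz_J (fun t => f (vreset (vshift x t) C)).
Proof.
have [[K f_lip] _] := f_qs; exists `|K| => -[t s] [/= Jt Js].
apply: (le_trans (f_lip _ _ (delay_in Jt) (delay_in Js))).
rewrite (le_trans (ler_wpM2r (supdist_ge0 _ _) (ler_norm K))) //.
by rewrite ler_wpM2l ?supdist_delay.
Qed.

Lemma quasi_simple_delay_drift t s : J t -> J s -> t <= s ->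
  f (vreset (vshift x t) C) - f (vreset (vshift x s) C) <= s - t.
Proof.
move=> Jt Js ts; have [_ f_lhd] := f_qs.
have [[c0 c0C]|CT] := pselect (exists c, c \notin C).
  exact: (f_lhd _ _ _ (delay_in Jt) (delay_in Js) (lhd_by_delay x c0C ts)).2.
have C_full c : c \in C by apply/negPn/negP => cC; apply: CT; exists c.
by rewrite !vreset_full // subrr subr_ge0.
Qed.

End QuasiSimpleDelay.

Theorem lemma3 (R : realType) (k : nat) (Clk L Act : finType)
  (LF : {set L}) (Inv : L -> set (valuation R Clk))
  (E : L -> Act -> set (valuation R Clk))
  (delta : L -> Act -> ({set Clk} * L)%type -> R)
  (Hpta : is_pta k LF Inv E delta)
  (l : L) (nu : valuation R Clk) (HnuV : inV k nu) (HnuInv : Inv l nu)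
  (zeta : set (valuation R Clk)) (Hzeta : is_region k Inv l zeta)
  (Hreach : reaches k nu zeta)
  (a : Act)
  (F : L -> valuation R Clk -> set (valuation R Clk) -> R)
  (HF : regionally_qs k Inv F)
  (Hdef : forall (C : {set Clk}) (l' : L), 0 < delta l a (C, l') ->
            reset_region k zeta C `<=` Inv l') :
  let I := [set t : R | 0 <= t /\ zeta (vshift nu t)] in
  let Fplus : R -> R := fun t : R =>
    t + \sum_(p : ({set Clk} * L)%type)
          (delta l a p * F p.2 (vreset (vshift nu t) p.1) (reset_region k zeta p.1) : R) in
  {within I, continuous Fplus} /\
  (forall t1 t2, I t1 -> I t2 -> t1 <= t2 -> Fplus t1 <= Fplus t2).
Proof.
(* The hypotheses on nu and the reachability of zeta only make I nonempty. *)
move=> I Fplus.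
have [_ _ /(_ l a) delta_dist] := Hpta.
have [zeta_reg _] := Hzeta.
pose g p t := F p.2 (vreset (vshift nu t) p.1) (reset_region k zeta p.1).
have g_qs p : 0 < delta l a p ->
    quasi_simple (sup_closure (reset_region k zeta p.1))
      (fun y => F p.2 y (reset_region k zeta p.1)).
  move: p => [C l'] /Hdef reset_Inv; apply: HF; split=> //.
  exact: is_clock_region_reset.
have delay_in (p : {set Clk} * L) t : I t ->
    sup_closure (reset_region k zeta p.1) (vreset (vshift nu t) p.1).
  by case=> _ zeta_t; apply: vreset_in_reset_closure.
split.
  have [M Fplus_lip] := drift_sum_lipschitz (g := g) delta_dist
    (fun p dp => quasi_simple_delay_lipschitz (g_qs p dp) (delay_in p)).
  exact: klipschitz_within_continuous Fplus_lip.
apply: (drift_sum_nondecreasing (g := g) delta_dist) => p dp.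
exact: quasi_simple_delay_drift (g_qs p dp) (delay_in p).
Qed.
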